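(* A locally compact Hausdorff space $X$ has the universal fixed point property if and only if it has the fixed point property with respect to the space $C(X,X)$.
   Context: $C(X,X)$ is the set of continuous self-maps of $X$ with the compact-open topology (generated by the sets $\{g\mid g(K)\subseteq U\}$, $K\subseteq X$ compact, $U\subseteq X$ open). A space $X$ has the fixed point property with respect to a topological space $T$ if for every continuous map $f\colon T\times X\to X$ there exists a continuous map $p\colon T\to X$ with $f(t,p(t))=p(t)$ for all $t\in T$. It has the universal fixed point property if it has the fixed point property with respect to every topological space $T$. *)

From HB Require Import structures.
From mathcomp Require Import all_boot all_order all_algebra.
From mathcomp Require Import all_classical all_reals all_analysis.
Set Implicit Arguments. Unset Strict Implicit. Unset Printing Implicit Defensive.
Local Open Scope classical_set_scope.

(* C(X,X): continuous self-maps of X, with the compact-open topology,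
   i.e. the subspace (initial) topology induced by the inclusion into
   mathcomp-analysis' compact-open topology {compact-open, X -> X} on all maps
   (generated by the sets {g | g(K) ⊆ U}, K compact, U open). *)
Definition CXX (X : topologicalType) : Type := {f : X -> X | continuous f}.

HB.instance Definition _ (X : topologicalType) := gen_eqMixin (CXX X).
HB.instance Definition _ (X : topologicalType) := gen_choiceMixin (CXX X).
HB.instance Definition _ (X : topologicalType) :=
  Topological.copy (CXX X)
    (@initial_topology (CXX X) {compact-open, X -> X}
       (fun f : CXX X => (proj1_sig f : {compact-open, X -> X}))).

Definition fpp_wrt (T X : topologicalType) : Prop :=
  forall f : T * X -> X, continuous f ->
    exists p : T -> X, continuous p /\ forall t : T, f (t, p t) = p t.

Definition universal_fpp (X : topologicalType) : Prop :=
  forall T : topologicalType, fpp_wrt T X.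

From HB Require Import structures.
From mathcomp Require Import all_boot all_order all_algebra.
From mathcomp Require Import all_classical all_reals all_analysis.
Local Open Scope classical_set_scope.

(* Every continuous [f : T * X -> X] factors as evaluation [C(X,X) * X -> X]
   after [curry f] on the first coordinate; curry is always continuous into the
   compact-open topology, while evaluation is continuous because X is locally
   compact Hausdorff. A continuous fixed point selection on C(X,X) for the
   evaluation map therefore pulls back along [curry f] to one on T. *)

Definition cxx_eval (X : topologicalType) (z : CXX X * X) : X := proj1_sig z.1 z.2.

Definition cxx_curry {T X : topologicalType} {f : T * X -> X} (cf : continuous f)
    (t : T) : CXX X :=
  exist _ (curry f t) ((continuous_curry cf).2 t).

Section CompactOpen.
Import ArrowAsCompactOpen.

Lemma continuous_cxx_val (X : topologicalType) :
  continuous (fun g : CXX X => (proj1_sig g : {compact-open, X -> X})).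
Proof. exact: initial_continuous. Qed.

Lemma continuous_cxx_eval {X : topologicalType} :
  hausdorff_space X -> locally_compact [set: X] -> continuous (@cxx_eval X).
Proof.
move=> hX lX.
have -> : @cxx_eval X = uncurry (fun g : CXX X => proj1_sig g).
  by apply: funext => -[].
apply: (continuous_uncurry (f := fun g : CXX X => proj1_sig g)) => //.
- exact: continuous_cxx_val.
- by move=> g; exact: proj2_sig g.
Qed.

Lemma continuous_cxx_curry {T X : topologicalType} {f : T * X -> X}
    (cf : continuous f) :
  continuous (cxx_curry cf).
Proof. exact/continuous_comp_initial/(continuous_curry cf).1. Qed.

End CompactOpen.

Lemma fpp_wrt_pullback {S T X : topologicalType} {e : S * X -> X} {g : T -> S} :
  fpp_wrt S X -> continuous e -> continuous g ->
  exists p : T -> X, continuous p /\ forall t, e (g t, p t) = p t.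
Proof.
move=> fppS ce cg; have [q [cq fixq]] := fppS e ce.
exists (q \o g); split; last by move=> t; exact: fixq.
by move=> t; apply: continuous_comp; [exact: cg | exact: cq].
Qed.

Theorem corollary7p4 (X : topologicalType) :
  hausdorff_space X -> locally_compact [set: X] ->
  (universal_fpp X <-> fpp_wrt (CXX X) X).
Proof.
move=> hX lX; split; first by move=> fppX; exact: fppX.
move=> fppC T f cf.
have [p [cp fixp]] := fpp_wrt_pullback fppC (continuous_cxx_eval hX lX)
  (continuous_cxx_curry cf).
by exists p; split=> // t; rewrite -[RHS]fixp.
Qed.
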